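(* Let $X$ be a (not necessarily locally compact) Hausdorff topological vector space, let $k:X\times X\to[0,+\infty]$ be a lower semicontinuous, symmetric, convex kernel function on $X\times X$, let $H\subset X$ be a bounded set with boundary $\partial H$, and let $\mu$ be a regular Borel probability measure on $X$. Then $\sup_{x\in H}U^\mu(x)=\sup_{x\in\partial H}U^\mu(x)$, where $U^\mu(x)=\int_X k(x,y)\,d\mu(y)$. *)

From HB Require Import structures.
From mathcomp Require Import all_boot all_order all_algebra.
From mathcomp Require Import all_classical all_reals all_analysis.
Set Implicit Arguments. Unset Strict Implicit. Unset Printing Implicit Defensive.
Import Order.TTheory GRing.Theory Num.Theory.
Local Open Scope classical_set_scope.
Local Open Scope ring_scope.

(* X viewed as a pointed type (pointed at 0), needed for the generated
   sigma-algebra construction. *)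
Definition ptd {R : realType} (X : topologicalLmodType R) : Type := X.
Section ptd_instances.
Context (R : realType) (X : topologicalLmodType R).
HB.instance Definition _ := Choice.on (ptd X).
HB.instance Definition _ := isPointed.Build (ptd X) (0 : X).
End ptd_instances.
Notation borelType X := (g_sigma_algebraType (@open X : set (set (ptd X)))).

Definition boundary (X : topologicalType) (H : set X) : set X :=
  closure H `\` interior H.

Definition tvs_bounded (R : realType) (X : topologicalLmodType R) (H : set X) :=
  forall V : set X, nbhs 0 V ->
    exists2 s : R, 0 < s & forall t : R, s < t -> H `<=` [set t *: v | v in V].

Definition regular_measure (R : realType) (X : topologicalLmodType R)
    (mu : set (borelType X) -> \bar R) :=
  forall A : set X, @measurable _ (borelType X) A ->
    mu A = ereal_sup [set mu K | K in [set K : set X | compact K /\ K `<=` A]] /\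
    mu A = ereal_inf [set mu U | U in [set U : set X | open U /\ A `<=` U]].

Definition convex_kernel (R : realType) (X : lmodType R) (k : X -> X -> \bar R) :=
  forall (x1 y1 x2 y2 : X) (t : R), 0 < t < 1 ->
    (k (t *: x1 + (1 - t) *: x2)%R (t *: y1 + (1 - t) *: y2)%R
      <= t%:E * k x1 y1 + (1 - t)%:E * k x2 y2)%E.

Definition symmetric_kernel (X : Type) (R : realType) (k : X -> X -> \bar R) :=
  forall x y, k x y = k y x.

Definition potential (R : realType) (X : topologicalLmodType R)
    (mu : set (borelType X) -> \bar R) (k : X -> X -> \bar R) (x : X) : \bar R :=
  (\int[mu]_(y in [set: borelType X]) k x y)%E.

(* Both inequalities hold pointwise.  A boundary point b lies in the closure
   of H and the potential U^mu is lower semicontinuous, so U^mu(b) is at most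
   the supremum of U^mu over H.  Conversely, given x in H and v <> 0, the line
   x + tv leaves the bounded set H in both directions through boundary points
   p and q; x is a convex combination of p and q, and U^mu inherits convexity
   from k, so U^mu(x) <= max (U^mu(p), U^mu(q)).

   Lower semicontinuity of U^mu needs no local compactness: if c < U^mu(b),
   some simple function h <= k(b, .) has c < int h dmu; inner regularity
   shrinks its level sets {h = r} to compact sets K_r with
   c < sum_r t r mu(K_r) for some t < 1, and by the tube lemma k(x, .) > t r
   on each K_r (r > 0) for every x near b, whence U^mu(x) > c. *)

From HB Require Import structures.
From mathcomp Require Import all_boot all_order all_algebra finmap.
From mathcomp Require Import all_classical all_reals all_analysis.
From mathcomp Require Import measurable_realfun ring.
Set Implicit Arguments.
Unset Strict Implicit.
Unset Printing Implicit Defensive.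

Import Order.TTheory GRing.Theory Num.Theory.
Local Open Scope classical_set_scope.
Local Open Scope ring_scope.

Lemma filter_forall_seq {T : Type} {I : eqType} (F : set_system T) (s : seq I)
    (P : I -> set T) : Filter F ->
  (forall i, i \in s -> \forall x \near F, P i x) ->
  \forall x \near F, forall i, i \in s -> P i x.
Proof.
move=> FF; elim: s => [|i s IHs] Ps.
  by apply: nearW => x j; rewrite in_nil.
have Pi := Ps i (mem_head i s).
have Pall := IHs (fun j js => Ps j (mem_behead (s := i :: s) js)).
apply: filterS (filterI Pi Pall) => x [Pix Psx] j.
by rewrite in_cons => /predU1P[->|/Psx].
Qed.

Section ereal_approximation.
Context {R : realType}.

Lemma lte_EFin_dense (x y : \bar R) : (x < y)%E ->
  exists2 c : R, (x < c%:E)%E & (c%:E < y)%E.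
Proof.
case: x => [x| |]; case: y => [y| |] //= xy.
- by exists ((x + y) / 2); rewrite lte_fin midf_lt.
- by exists (x + 1); rewrite ?ltry // lte_fin ltrDl.
- by exists (y - 1); rewrite ?ltNyr // lte_fin ltrBlDr ltrDl.
- by exists 0; rewrite ?ltNyr ?ltry.
Qed.

Lemma lte_mul_lt1_exists (c : R) (x : \bar R) : 0 <= c -> (c%:E < x)%E ->
  exists2 t : R, 0 < t < 1 & (c%:E < t%:E * x)%E.
Proof.
move=> c_ge0 /lte_EFin_dense[y cy yx]; rewrite lte_fin in cy.
have y_gt0 : 0 < y by apply: le_lt_trans cy.
have cy1 : c / y < 1 by rewrite ltr_pdivrMr // mul1r.
have [cy_t t_lt1] := midf_lt cy1.
have t_gt0 : 0 < (c / y + 1) / 2.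
  by apply: le_lt_trans cy_t; rewrite divr_ge0 // ltW.
exists ((c / y + 1) / 2); first by rewrite t_gt0.
apply: (@lt_trans _ _ ((c / y + 1) / 2 * y)%:E).
  by rewrite lte_fin -ltr_pdivrMr.
by rewrite EFinM lte_pmul2l.
Qed.

Lemma lte_sum_approx (I : eqType) (T : Type) (t0 : T) (s : seq I)
    (a : I -> \bar R) (g : I -> T -> \bar R) (P : I -> T -> Prop) (c : R) :
  uniq s -> (forall i, i \in s -> a i \is a fin_num) ->
  (forall i (e : R), i \in s -> (e%:E < a i)%E ->
     exists2 t, P i t & (e%:E < g i t)%E) ->
  (c%:E < \sum_(i <- s) a i)%E ->
  exists2 F : I -> T, (forall i, i \in s -> P i (F i)) &
    (c%:E < \sum_(i <- s) g i (F i))%E.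
Proof.
elim: s c => [|i s IHs] c.
  move=> _ _ _; rewrite big_nil => c_lt0.
  by exists (fun=> t0) => [i|]; rewrite ?in_nil // big_nil.
rewrite cons_uniq => /andP[i_notin_s s_uniq] a_fin a_approx.
have sub_s j : j \in s -> j \in i :: s by move=> js; rewrite in_cons js orbT.
have ai_fin : a i \is a fin_num by apply: a_fin; exact: mem_head.
rewrite big_cons -(fineK ai_fin) -lteBlDl // -EFinB.
move=> /lte_EFin_dense[d cd d_lt_sum].
have [F Fs dF] := IHs d s_uniq (fun j js => a_fin j (sub_s j js))
  (fun j e js => a_approx j e (sub_s j js)) d_lt_sum.
have [t Pt cdt] : exists2 t, P i t & ((c - d)%:E < g i t)%E.
  apply: a_approx; first exact: mem_head.
  by rewrite -(fineK ai_fin) lte_fin ltrBlDl -ltrBlDr -lte_fin.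
have F_s j : j \in s -> (if j == i then t else F j) = F j.
  by case: eqP => // -> i_s; rewrite i_s in i_notin_s.
exists (fun j => if j == i then t else F j).
  by move=> j; rewrite in_cons; case: eqP => [-> | _ /Fs].
rewrite big_cons eqxx (eq_big_seq (fun j => g j (F j))); last first.
  by move=> j /F_s ->.
by rewrite -(subrK d c) EFinD lteD.
Qed.
End ereal_approximation.

Section integral_lower_bound.
Context d (T : measurableType d) (R : realType).
Context (mu : {measure set T -> \bar R}).
Local Open Scope ereal_scope.

Lemma disjoint_sum_measure_le_integral (I : eqType) (s : seq I) (a : I -> R)
    (K : I -> set T) (f : T -> \bar R) :
  uniq s -> (forall i, i \in s -> (0 <= a i)%R) ->
  (forall i, i \in s -> measurable (K i)) ->
  measurable_fun setT f -> (forall y, 0 <= f y) ->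
  (forall i j y, i \in s -> j \in s -> K i y -> K j y -> i = j) ->
  (forall i y, i \in s -> K i y -> (a i)%:E <= f y) ->
  \sum_(i <- s) (a i)%:E * mu (K i) <= \int[mu]_(y in setT) f y.
Proof.
move=> s_uniq a_ge0 mK mf f_ge0 K_disj Kf.
pose g i y := if i \in s then (a i)%:E * (\1_(K i) y)%:E else 0.
have g_ge0 i y : 0 <= g i y.
  by rewrite /g; case: ifP => // /a_ge0 ai_ge0; rewrite mule_ge0 ?lee_fin.
have mg i : measurable_fun setT (g i).
  rewrite /g; case: (boolP (i \in s)) => [/mK mKi|_] /=.
    by apply: measurable_funeM; apply/measurable_EFinP; exact: measurable_indic.
  exact: measurable_cst.
have -> : \sum_(i <- s) (a i)%:E * mu (K i) =
    \int[mu]_(y in setT) \sum_(i <- s) g i y.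
  rewrite ge0_integral_sum //; apply: eq_big_seq => i i_s.
  have mKi := mK i i_s.
  rewrite /g i_s ge0_integralZl_EFin ?a_ge0 ?integral_indic ?setIT //.
  by apply/measurable_EFinP; exact: measurable_indic.
apply: ge0_le_integral => //.
- by move=> y _; apply: sume_ge0.
- exact: emeasurable_sum.
move=> y _; have [[i i_s Kiy]|noK] := pselect (exists2 i, i \in s & K i y).
  rewrite (bigD1_seq i) //= big1_seq ?adde0.
    by rewrite /g i_s indicE mem_set // mule1; exact: Kf.
  move=> j /andP[ji js]; rewrite /g js indicE memNset ?mule0 // => Kjy.
  by move: ji; rewrite (K_disj _ _ _ js i_s Kjy Kiy) eqxx.
rewrite big1_seq; first exact: f_ge0.
move=> j /andP[_ js]; rewrite /g js indicE memNset ?mule0 // => Kjy.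
by apply: noK; exists j.
Qed.
End integral_lower_bound.

Section lower_semicontinuity.
Context {R : realType}.
Local Open Scope ereal_scope.

Lemma lower_semicontinuous_snd (X Y : topologicalType) (k : X -> Y -> \bar R) :
  lower_semicontinuous (fun p : X * Y => k p.1 p.2) ->
  forall x, lower_semicontinuous (k x).
Proof.
move=> k_lsc x y a a_lt.
have [V [[A B] /= [xA yB] ABV] kV] := k_lsc (x, y) a a_lt.
exists B => // z Bz; apply: (kV (x, z)); apply: ABV; split => //=.
exact: nbhs_singleton.
Qed.

Lemma lower_semicontinuous_tube (X Y : topologicalType) (k : X -> Y -> \bar R)
    (K : set Y) (b : X) (a : R) :
  lower_semicontinuous (fun p : X * Y => k p.1 p.2) -> compact K ->
  (forall y, K y -> a%:E < k b y) ->
  \forall x \near b, forall y, K y -> a%:E < k x y.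
Proof.
move=> k_lsc /compact_near_coveringP K_cpt a_lt_kb.
apply: (K_cpt X (nbhs b) (fun x y => a%:E < k x y)) => y Ky.
have [V [[A B] /= [bA yB] ABV] kV] := k_lsc (b, y) a (a_lt_kb y Ky).
by exists (B, A) => //= -[z x] /= [Bz Ax]; apply: (kV (x, z)); apply: ABV.
Qed.

Lemma lower_semicontinuous_ereal_sup_closure (T : topologicalType)
    (f : T -> \bar R) (A H : set T) :
  lower_semicontinuous f -> A `<=` closure H ->
  ereal_sup (f @` A) <= ereal_sup (f @` H).
Proof.
move=> f_lsc AH; apply: ge_ereal_sup => _ [b /AH Hb <-].
rewrite leNgt; apply/negP => /lte_EFin_dense[c supc cfb].
have [V bV fV] := f_lsc b c cfb.
have [y [Hy Vy]] := Hb V bV.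
have := fV y Vy; apply/negP; rewrite -leNgt.
by apply: le_trans (ltW supc); apply: ereal_sup_ubound; exists y.
Qed.
End lower_semicontinuity.

Section borel_sets.
Context {R : realType} {X : topologicalLmodType R}.

Lemma compact_borel_measurable (K : set X) : hausdorff_space X -> compact K ->
  @measurable _ (borelType X) K.
Proof.
move=> hX /(compact_closed hX) K_closed.
rewrite -[K]setCK; apply: measurableC; apply: sub_sigma_algebra.
exact: closed_openC.
Qed.

Lemma lower_semicontinuous_borel_measurable (f : X -> \bar R) :
  lower_semicontinuous f -> measurable_fun [set: borelType X] f.
Proof.
move=> /lower_semicontinuousP f_lsc.
apply: (measurability _ (ErealGenOInfty.measurableE R)).
move=> /= _ [_ [a ->]] <-; apply: measurableI => //.
by apply: sub_sigma_algebra; rewrite preimage_itvoy; exact: f_lsc.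
Qed.
End borel_sets.

Definition econvex_function (R : realType) (X : lmodType R) (f : X -> \bar R) :=
  forall (a b : X) (t : R), 0 < t < 1 ->
    (f (t *: a + (1 - t) *: b)%R <= t%:E * f a + (1 - t)%:E * f b)%E.

Lemma econvex_function_le (R : realType) (X : lmodType R) (f : X -> \bar R)
    (S : \bar R) (a b : X) (t : R) :
  econvex_function f -> 0 < t < 1 -> (f a <= S)%E -> (f b <= S)%E ->
  (f (t *: a + (1 - t) *: b)%R <= S)%E.
Proof.
move=> f_conv t01 faS fbS; apply: (le_trans (f_conv a b t t01)).
have /andP[t_gt0 t_lt1] := t01.
have t_ge0 : (0 <= t%:E)%E by rewrite lee_fin ltW.
have t'_ge0 : (0 <= (1 - t)%:E)%E by rewrite lee_fin subr_ge0 ltW.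
apply: (le_trans (leeD (lee_wpmul2l t_ge0 faS) (lee_wpmul2l t'_ge0 fbS))).
by rewrite -ge0_muleDl // -EFinD subrKC mul1e.
Qed.

Section rays.
Context {R : realType} {X : topologicalLmodType R}.

Lemma tvs_bounded_ray_ub (H : set X) (x w : X) :
  hausdorff_space X -> w != 0 -> tvs_bounded H -> H x ->
  exists M : R, forall t, H (x + t *: w) -> t <= M.
Proof.
move=> hX w_neq0 Hb Hx.
have [W [W_open W0 Ww]] : exists W : set X, [/\ open W, 0 \in W & w \in ~` W].
  by apply: hausdorff_accessible; rewrite // eq_sym.
have nW : nbhs (0 : X) W.
  by apply: open_nbhs_nbhs; split => //; move: W0; rewrite inE.
have := @scale_continuous R X (0, 0) W; rewrite /= scale0r => /(_ nW).
move=> [[A N] /= [/nbhs_normP[d /= d_gt0 dA] N0] AN].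
have := @sub_continuous X (0, 0) N; rewrite /= subr0 => /(_ N0).
move=> [[V1 V2] /= [V10 V20] VN].
have [s s_gt0 Hs] := Hb (V1 `&` V2) (filterI V10 V20).
(* [x] and [x + t w] lie in [(s + 1) (V1 `&` V2)], so [w] is [(s + 1) / t]
   times a vector of [N], which lies in [W] as soon as [(s + 1) / t < d]. *)
exists ((s + 1) / d) => t Ht; rewrite leNgt; apply/negP => t_gt.
have t_gt0 : 0 < t by apply: lt_trans t_gt; rewrite divr_gt0 // addr_gt0.
have s1 : s < s + 1 by rewrite ltrDl.
have [a [a1 a2] xa] := Hs (s + 1) s1 x Hx.
have [b [b1 b2] xb] := Hs (s + 1) s1 _ Ht.
have wE : w = ((s + 1) / t) *: (b - a).
  rewrite mulrC -scalerA scalerBr xa xb addrAC subrr add0r scalerA.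
  by rewrite mulVf ?gt_eqF // scale1r.
move: Ww; rewrite inE /=; apply; rewrite wE.
apply: (AN ((s + 1) / t, b - a)); split => /=; last exact: (VN (b, a)).
apply: dA => /=; rewrite sub0r normrN ger0_norm ?divr_ge0 ?ltW ?addr_gt0 //.
by rewrite ltr_pdivrMr // mulrC -ltr_pdivrMr.
Qed.

Lemma near_line (x w : X) (tau : R) (B : set X) : nbhs (x + tau *: w) B ->
  exists2 d : R, 0 < d & forall u : R, `|tau - u| < d -> B (x + u *: w).
Proof.
move=> /(@add_continuous X (x, tau *: w))[[P1 P2] /= [xP1 P2tw] PB].
have [[A N] /= [/nbhs_normP[d /= d_gt0 dA] wN] AN] :=
  @scale_continuous R X (tau, w) P2 P2tw.
exists d => // u ud; apply: (PB (x, u *: w)); split => /=.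
  exact: nbhs_singleton.
by apply: (AN (u, w)); split => //=; [exact: dA | exact: nbhs_singleton].
Qed.

Lemma ray_meets_boundary (H : set X) (x w : X) :
  hausdorff_space X -> w != 0 -> tvs_bounded H -> H x ->
  exists2 tau : R, 0 <= tau & boundary H (x + tau *: w).
Proof.
move=> hX w_neq0 Hb Hx.
have [xi|xni] := pselect (interior H x); last first.
  by exists 0 => //; rewrite scale0r addr0; split => //; exact: subset_closure.
pose S := [set t : R |
  0 <= t /\ forall u, 0 <= u <= t -> interior H (x + u *: w)].
have S0 : S 0.
  by split => // u; rewrite -eq_le => /eqP <-; rewrite scale0r addr0.
have [M HM] := tvs_bounded_ray_ub hX w_neq0 Hb Hx.
have S_sup : has_sup S.
  split; first by exists 0.
  exists M => t [t_ge0 St]; apply: HM; apply: interior_subset; apply: St.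
  by rewrite t_ge0 lexx.
have tau_ge0 : 0 <= sup S := sup_upper_bound S_sup S0.
exists (sup S) => //; split.
- move=> B /near_line[d d_gt0 dB].
  have [u Su ud] := sup_adherent d_gt0 S_sup.
  exists (x + u *: w); split.
    by apply: interior_subset; apply: Su.2; rewrite Su.1 lexx.
  apply: dB; rewrite ger0_norm; first by rewrite ltrBlDr -ltrBlDl.
  by rewrite subr_ge0; exact: sup_upper_bound.
- move=> /nbhs_interior/near_line[d d_gt0 dH].
  have S_beyond : S (sup S + d / 2).
    split; first by rewrite addr_ge0 // divr_ge0 // ltW.
    move=> u /andP[u_ge0 u_le]; have [u_lt|u_ge] := ltP u (sup S).
      have [v Sv uv] : exists2 v, S v & sup S - (sup S - u) < v.
        by apply: sup_adherent S_sup; rewrite subr_gt0.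
      by apply: Sv.2; rewrite u_ge0 ltW // -(subKr (sup S) u).
    apply: dH; rewrite distrC ger0_norm ?subr_ge0 //.
    rewrite ltrBlDl (le_lt_trans u_le) // ltrD2l.
    by rewrite ltr_pdivrMr // ltr_pMr // ltr1n.
  have := sup_upper_bound S_sup S_beyond.
  by rewrite gerDl leNgt divr_gt0.
Qed.

Lemma econvex_ereal_sup_boundary (f : X -> \bar R) (H : set X) :
  hausdorff_space X -> (exists v : X, v != 0) -> tvs_bounded H ->
  econvex_function f ->
  (ereal_sup (f @` H) <= ereal_sup (f @` boundary H))%E.
Proof.
move=> hX [v v_neq0] Hb f_conv; apply: ge_ereal_sup => _ [x Hx <-].
set S := ereal_sup _.
have f_le_S y : boundary H y -> (f y <= S)%E.
  by move=> By; apply: ereal_sup_ubound; exists y.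
have [t1 t1_ge0 B1] := ray_meets_boundary hX v_neq0 Hb Hx.
have mv_neq0 : - v != 0 by rewrite oppr_eq0.
have [t2 t2_ge0 B2] := ray_meets_boundary hX mv_neq0 Hb Hx.
have [t1_eq0|t1_neq0] := eqVneq t1 0.
  by move: B1; rewrite t1_eq0 scale0r addr0 => /f_le_S.
have [t2_eq0|t2_neq0] := eqVneq t2 0.
  by move: B2; rewrite t2_eq0 scale0r addr0 => /f_le_S.
have t1_gt0 : 0 < t1 by rewrite lt_def t1_neq0.
have t2_gt0 : 0 < t2 by rewrite lt_def t2_neq0.
pose l := t2 / (t1 + t2).
have l01 : 0 < l < 1.
  by rewrite divr_gt0 ?addr_gt0 //= ltr_pdivrMr ?addr_gt0 // mul1r ltrDr.
have l_balance : l * t1 - (1 - l) * t2 = 0.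
  by rewrite /l; field; rewrite gt_eqF // addr_gt0.
have -> : x = l *: (x + t1 *: v) + (1 - l) *: (x + t2 *: - v).
  rewrite !scalerDr !scalerA scalerN addrACA -scalerDl -scalerBl.
  by rewrite subrKC scale1r l_balance scale0r addr0.
exact: econvex_function_le f_conv l01 (f_le_S _ B1) (f_le_S _ B2).
Qed.
End rays.

Lemma regular_lte_sum_compact (R : realType) (X : topologicalLmodType R)
    (mu : probability (borelType X) R) (I : eqType) (s : seq I) (a : I -> R)
    (A : I -> set X) (c : R) :
  regular_measure mu -> uniq s -> (forall i, i \in s -> 0 <= a i) ->
  (forall i, i \in s -> @measurable _ (borelType X) (A i)) ->
  (c%:E < \sum_(i <- s) (a i)%:E * mu (A i))%E ->
  exists2 K : I -> set X, (forall i, i \in s -> compact (K i) /\ K i `<=` A i) &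
    (c%:E < \sum_(i <- s) (a i)%:E * mu (K i))%E.
Proof.
move=> mu_reg s_uniq a_ge0 mA.
apply: (lte_sum_approx (P := fun i K => compact K /\ K `<=` A i)
  (g := fun i K => ((a i)%:E * mu K)%E) set0) => // [i i_s|i e i_s].
  by rewrite fin_numM // fin_num_measure //; exact: mA.
have [->|ai_neq0] := eqVneq (a i) 0.
  rewrite mul0e => e_lt0; exists set0; last by rewrite mul0e.
  by split; [exact: compact0 | exact: sub0set].
have ai_gt0 : 0 < a i by rewrite lt_def ai_neq0 a_ge0.
rewrite -lte_pdivrMl // (mu_reg _ (mA i i_s)).1.
move=> /ereal_sup_gt[_ [K KA <-] eK].
by exists K => //; rewrite -lte_pdivrMl.
Qed.

Section potential.
Import HBNNSimple.
Context {R : realType} {X : topologicalLmodType R} (k : X -> X -> \bar R).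
Context (mu : probability (borelType X) R).
Hypothesis k_ge0 : forall x y, (0 <= k x y)%E.
Hypothesis k_lsc : lower_semicontinuous (fun p : X * X => k p.1 p.2).

Let k_measurable x : measurable_fun [set: borelType X] (k x) :=
  lower_semicontinuous_borel_measurable
    (lower_semicontinuous_snd (x := x) k_lsc).

Lemma potential_econvex : convex_kernel k -> econvex_function (potential mu k).
Proof.
move=> k_conv a b t /andP[t_gt0 t_lt1].
have t_ge0 : 0 <= t by exact: ltW.
have t'_ge0 : 0 <= 1 - t by rewrite subr_ge0 ltW.
have kZ x u : 0 <= u -> (u%:E * potential mu k x =
    \int[mu]_(y in [set: borelType X]) (u%:E * k x y))%E.
  by move=> u_ge0; rewrite /potential ge0_integralZl_EFin.
rewrite (kZ a t t_ge0) (kZ b (1 - t) t'_ge0) /potential.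
rewrite -ge0_integralD //; last 4 first.
- by move=> y _; rewrite mule_ge0.
- exact: measurable_funeM.
- by move=> y _; rewrite mule_ge0.
- exact: measurable_funeM.
apply: (ge0_le_integral mu measurableT (fun y _ => k_ge0 _ y) (k_measurable _)).
  by apply: emeasurable_funD; exact: measurable_funeM.
move=> y _; have := k_conv a y b y t; rewrite t_gt0 t_lt1 => /(_ isT).
by rewrite -scalerDl subrKC scale1r.
Qed.

Lemma near_potential_ge_sum (I : eqType) (s : seq I) (a : I -> R)
    (K : I -> set X) (b : X) (t : R) :
  hausdorff_space X -> uniq s -> 0 < t < 1 -> (forall i, i \in s -> 0 <= a i) ->
  (forall i, i \in s -> compact (K i)) ->
  (forall i j y, i \in s -> j \in s -> K i y -> K j y -> i = j) ->
  (forall i y, i \in s -> K i y -> ((a i)%:E <= k b y)%E) ->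
  \forall x \near b,
    (\sum_(i <- s) (t * a i)%:E * mu (K i) <= potential mu k x)%E.
Proof.
move=> hX s_uniq /andP[t_gt0 t_lt1] a_ge0 K_cpt K_disj a_le_kb.
have ta_ge0 i : i \in s -> 0 <= t * a i.
  by move=> /a_ge0; apply: mulr_ge0; exact: ltW.
have : \forall x \near b, forall i, i \in s -> forall y, K i y ->
    ((t * a i)%:E <= k x y)%E.
  apply: filter_forall_seq => i i_s.
  have [ai_eq0|ai_neq0] := eqVneq (a i) 0.
    by apply: nearW => x y _; rewrite ai_eq0 mulr0; exact: k_ge0.
  (* As [t < 1], the bound [a i <= k b y] becomes strict, as the tube lemma
     requires. *)
  have ta_lt_kb y : K i y -> ((t * a i)%:E < k b y)%E.
    move=> Kiy; apply: (lt_le_trans _ (a_le_kb i y i_s Kiy)).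
    by rewrite lte_fin gtr_pMl // lt_def ai_neq0 a_ge0.
  apply: filterS (lower_semicontinuous_tube k_lsc (K_cpt i i_s) ta_lt_kb).
  by move=> x ta_lt_kx y Ky; exact/ltW/ta_lt_kx.
apply: filterS => x ta_le_kx.
apply: disjoint_sum_measure_le_integral => //.
- by move=> i i_s; exact: compact_borel_measurable hX (K_cpt i i_s).
- by move=> i y i_s; exact: ta_le_kx.
Qed.

Lemma potential_lsc : hausdorff_space X -> regular_measure mu ->
  lower_semicontinuous (potential mu k).
Proof.
move=> hX mu_reg b c c_lt_Ub.
have [c_lt0|c_ge0] := ltP c 0.
  exists setT => [|x _]; first exact: filterT.
  by apply: (lt_le_trans _ (integral_ge0 _ _)) => [|y _]; rewrite ?lte_fin.
move: c_lt_Ub; rewrite /potential ge0_integralTE //.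
move=> /ereal_sup_gt[_ [h h_le <-]].
rewrite sintegralE fsbig_finite /=; last exact: fimfunP.
set s := enum_fset _ => c_lt_sum.
have s_uniq : uniq s := fset_uniq _.
have s_ge0 r : r \in s -> 0 <= r.
  rewrite in_fset_set; last exact: fimfunP.
  by rewrite inE => -[y _ <-]; exact: fun_ge0.
pose A r := h @^-1` [set r].
have mA r : @measurable _ (borelType X) (A r) :=
  measurable_funPTI h (measurable_set1 r).
have [t t01] := lte_mul_lt1_exists c_ge0 c_lt_sum.
rewrite fin_num_sume_distrr //; last first.
  by move=> r r' _ _; rewrite fin_num_adde_defl // fin_numM // fin_num_measure.
under eq_bigr do rewrite muleA -EFinM.
have t_s_ge0 r : r \in s -> 0 <= t * r.
  by move=> /s_ge0; apply: mulr_ge0; case/andP: t01 => /ltW.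
move=> /(regular_lte_sum_compact mu_reg s_uniq t_s_ge0 (fun r _ => mA r)).
move=> [K K_cpt c_lt_Ksum].
have K_disj r r' y : r \in s -> r' \in s -> K r y -> K r' y -> r = r'.
  by move=> r_s r'_s /(K_cpt r r_s).2 <- /(K_cpt r' r'_s).2.
have h_le_kb r y : r \in s -> K r y -> (r%:E <= k b y)%E.
  by move=> r_s /(K_cpt r r_s).2 <-; exact: h_le.
eexists.
  apply: near_potential_ge_sum hX s_uniq t01 s_ge0 _ K_disj h_le_kb.
  by move=> r r_s; case: (K_cpt r r_s).
by move=> x; exact: lt_le_trans.
Qed.
End potential.

Theorem lemma3p7 (R : realType) (X : topologicalLmodType R)
  (k : X -> X -> \bar R) (H : set X) (mu : probability (borelType X) R) :
  hausdorff_space X ->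
  (exists x : X, x != 0) ->
  (forall x y, (0 <= k x y)%E) ->
  lower_semicontinuous (fun p : X * X => k p.1 p.2) ->
  symmetric_kernel k ->
  convex_kernel k ->
  tvs_bounded H ->
  regular_measure mu ->
  ereal_sup [set potential mu k x | x in H] =
  ereal_sup [set potential mu k x | x in boundary H].
Proof.
move=> hX X_nontrivial k_ge0 k_lsc _ k_conv Hb mu_reg.
apply: le_anti; apply/andP; split.
  apply: econvex_ereal_sup_boundary => //; exact: potential_econvex.
apply: lower_semicontinuous_ereal_sup_closure; first exact: potential_lsc.
by move=> x [].
Qed.
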